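(* (Tur\'an's inequality for Hermite functions.) For every $k\in\mathbb{R}$ and every $x\ge L_k$, $$H_k(x)^2-H_{k-1}(x)H_{k+1}(x)>0,$$ where $L_k$ is the leftmost real zero of $H_k$ if $k>0$, and $L_k=-\infty$ (so the inequality holds on all of $\mathbb{R}$) if $k\le 0$.
   Context: For real $k$, the Hermite function $H_k:\mathbb{R}\to\mathbb{R}$ is the (unique) solution of $H_k''(x)-xH_k'(x)+kH_k(x)=0$ with $H_k(x)=x^k+o(x^k)$ as $x\to+\infty$; for nonnegative integers $k$ it is the monic probabilists' Hermite polynomial, and in general $H_k(x)=e^{x^2/4}D_k(x)$ with $D_k$ the parabolic cylinder function. For $k\le 0$, $H_k$ has no real zeros; for $n<k\le n+1$ ($n=0,1,\dots$), $H_k$ has exactly $n+1$ real zeros. *)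

From Stdlib Require Import Reals Lra.
Open Scope R_scope.

(* By the context such an H exists and is
   unique, so quantifying over all such H is the same as talking about H_k. *)
Definition is_hermite (k : R) (H : R -> R) : Prop :=
  exists H1 H2 : R -> R,
    (forall x, derivable_pt_lim H x (H1 x)) /\
    (forall x, derivable_pt_lim H1 x (H2 x)) /\
    (forall x, H2 x - x * H1 x + k * H x = 0) /\
    (forall eps, 0 < eps -> exists M, 0 < M /\
        forall x, M < x -> Rabs (H x / Rpower x k - 1) < eps).

Definition leftmost_zero (f : R -> R) (L : R) : Prop :=
  f L = 0 /\ forall y, f y = 0 -> L <= y.

(* Uniqueness for the Hermite equation [y'' = x y' - k y] identifies the solutions of
   at most exponential growth at +oo with multiples of H_k (their Wronskian with H_k is
   a multiple of [e^(x^2/2)]); since [x H_(k-1) - H_(k-1)'] is such a solution and has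
   the right asymptotics, [H_k = x H_(k-1) - H_(k-1)'], whence [H_k' = k H_(k-1)] and
   [H_(k+1) = x H_k - k H_(k-1)].  The Turán expression becomes
   [T = H_k^2 - x H_k H_(k-1) + k H_(k-1)^2], with [(e^(-x^2/2) T)' = -e^(-x^2/2) H_k H_(k-1)],
   and [e^(-x^2/2) T] tends to 0 at +oo.
   For [k <= 0] the same argument applied to [e^(-x^2/2) H_k H_(k-1)] shows [H_k H_(k-1) > 0],
   so [e^(-x^2/2) T] decreases strictly to 0.  For [k > 0], [T <= 0] forces [x H_k H_(k-1) > 0];
   hence a nonpositive value of [T] at [x < 0] propagates leftwards down to the zero [L] of
   [H_k], where [T(L) = k H_(k-1)(L)^2 >= 0], and one at [x > 0] propagates rightwards, making
   [H_(k-1)/H_k] increasing, against its decay like [1/x]. *)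

From Stdlib Require Import Reals Lra.
From Coquelicot Require Import Coquelicot.
Open Scope R_scope.

Lemma exp_le_compat x y : x <= y -> exp x <= exp y.
Proof.
  intros Hxy; destruct (Rle_lt_or_eq_dec _ _ Hxy) as [Hlt | ->].
  - left; apply exp_increasing, Hlt.
  - apply Rle_refl.
Qed.

Lemma ln_le_id x : 0 < x -> ln x <= x.
Proof.
  intros Hx; pose proof (exp_ineq1_le (ln x)) as Hexp.
  rewrite exp_ln in Hexp; lra.
Qed.

Lemma is_derive_ex_derive (f f' : R -> R) :
  (forall y, is_derive f y (f' y)) -> forall y, ex_derive f y.
Proof. intros Hf y; exists (f' y); apply Hf. Qed.

Lemma Derive_is_derive (f f' : R -> R) :
  (forall y, is_derive f y (f' y)) -> forall y, Derive (fun z => f z) y = f' y.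
Proof. intros Hf y; apply is_derive_unique, Hf. Qed.

Lemma derive_nonpos_le (f f' : R -> R) a b :
  (forall y, a <= y <= b -> is_derive f y (f' y)) -> a <= b ->
  (forall y, a <= y <= b -> f' y <= 0) -> f b <= f a.
Proof.
  intros Hf Hab Hsign; destruct (Rle_lt_or_eq_dec _ _ Hab) as [Hlt | ->]; [| lra].
  destruct (MVT_cor2 f f' a b Hlt) as [c [Hc Hcab]].
  - intros c Hcab; apply is_derive_Reals, Hf; lra.
  - assert (f' c <= 0) by (apply Hsign; lra); nra.
Qed.

Lemma derive_nonneg_le (f f' : R -> R) a b :
  (forall y, a <= y <= b -> is_derive f y (f' y)) -> a <= b ->
  (forall y, a <= y <= b -> 0 <= f' y) -> f a <= f b.
Proof.
  intros Hf Hab Hsign.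
  enough (- f b <= - f a) by lra.
  apply (derive_nonpos_le (fun y => - f y) (fun y => - f' y)); auto.
  - intros y Hy; apply (is_derive_opp f), Hf, Hy.
  - intros y Hy; specialize (Hsign y Hy); lra.
Qed.

Lemma derive_zero_const (f : R -> R) :
  (forall y, is_derive f y 0) -> forall x y, f x = f y.
Proof.
  intros Hf.
  assert (Hle : forall x y, x <= y -> f x = f y).
  { intros x y Hxy.
    pose proof (derive_nonpos_le f (fun _ => 0) x y ltac:(auto) Hxy ltac:(intros; lra)).
    pose proof (derive_nonneg_le f (fun _ => 0) x y ltac:(auto) Hxy ltac:(intros; lra)).
    lra. }
  intros x y; destruct (Rle_lt_dec x y); [auto | symmetry; apply Hle; lra].
Qed.

Lemma derive_neg_not_right_min (g : R -> R) l a b :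
  is_derive g a l -> l < 0 -> a < b -> ~ (forall y, a <= y <= b -> g a <= g y).
Proof.
  intros Hd Hl Hab Hmin; apply is_derive_Reals in Hd.
  destruct (Hd (- l / 2) ltac:(lra)) as [del Hdel].
  set (h := Rmin (del / 2) (b - a)).
  assert (Hh : 0 < h) by (unfold h; apply Rmin_case; pose proof (cond_pos del); lra).
  assert (Hhb : h <= b - a) by apply Rmin_r.
  assert (Hhdel : h < del)
    by (unfold h; pose proof (Rmin_l (del / 2) (b - a)); pose proof (cond_pos del); lra).
  specialize (Hdel h ltac:(lra) ltac:(rewrite Rabs_right; lra)).
  apply Rabs_def2 in Hdel as [Hdel _].
  specialize (Hmin (a + h) ltac:(lra)).
  assert ((g (a + h) - g a) / h >= 0) by (apply Rle_ge, Rdiv_le_0_compat; lra).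
  lra.
Qed.

Lemma nonpos_trap_right (g g' : R -> R) a b :
  (forall y, is_derive g y (g' y)) -> a < b -> g a <= 0 ->
  (forall y, a <= y <= b -> g y <= 0 -> g' y < 0) -> g b < 0.
Proof.
  intros Hd Hab Ha Hsign; destruct (Rlt_le_dec (g b) 0) as [Hb | Hb]; [exact Hb | exfalso].
  assert (Hcont : forall c, a <= c <= b -> continuity_pt g c)
    by (intros c _; apply derivable_continuous_pt; exists (g' c); apply is_derive_Reals, Hd).
  destruct (continuity_ab_min g a b ltac:(lra) Hcont) as [c [Hmin Hc]].
  destruct (Rlt_le_dec (g c) (g a)) as [Hlt | Hge].
  - assert (c <> a) by (intros ->; lra); assert (c <> b) by (intros ->; lra).
    assert (Hd0 : derive_pt g c (exist _ (g' c) (proj1 (is_derive_Reals _ _ _) (Hd c))) = 0).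
    { apply (deriv_minimum g a b c); [lra | lra | intros y Hy1 Hy2; apply Hmin; lra]. }
    simpl in Hd0; specialize (Hsign c Hc ltac:(lra)); lra.
  - apply (derive_neg_not_right_min g (g' a) a b (Hd a) (Hsign a ltac:(lra) Ha) Hab).
    intros y Hy; specialize (Hmin y Hy); lra.
Qed.

Lemma nonpos_trap_left (g g' : R -> R) a b :
  (forall y, is_derive g y (g' y)) -> a < b -> g b <= 0 ->
  (forall y, a <= y <= b -> g y <= 0 -> 0 < g' y) -> g a < 0.
Proof.
  intros Hd Hab Hb Hsign.
  pose proof (nonpos_trap_right (fun y => g (- y)) (fun y => - g' (- y)) (- b) (- a)) as Htrap.
  cbv beta in Htrap; rewrite !Ropp_involutive in Htrap.
  apply Htrap; clear Htrap; [| lra | exact Hb |].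
  - intro y; auto_derive; [apply (is_derive_ex_derive g g' Hd) |].
    rewrite (Derive_is_derive g g' Hd); ring.
  - intros y Hy Hgy; specialize (Hsign (- y) ltac:(lra) Hgy); lra.
Qed.

Definition vanishes_at_infty (f : R -> R) : Prop :=
  forall eps, 0 < eps -> exists N, forall y, N <= y -> Rabs (f y) < eps.

Lemma antitone_vanishing_nonneg (f f' : R -> R) :
  (forall y, is_derive f y (f' y)) -> (forall y, f' y <= 0) ->
  vanishes_at_infty f -> forall x, 0 <= f x.
Proof.
  intros Hd Hsign Hlim x; destruct (Rle_lt_dec 0 (f x)) as [Hx | Hx]; [exact Hx | exfalso].
  destruct (Hlim (- f x) ltac:(lra)) as [N HN].
  pose proof (Rmax_l N x); pose proof (Rmax_r N x).
  pose proof (derive_nonpos_le f f' x (Rmax N x) ltac:(auto) ltac:(lra) ltac:(auto)).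
  specialize (HN (Rmax N x) ltac:(lra)); apply Rabs_def2 in HN; lra.
Qed.

Lemma decreasing_vanishing_pos (f f' : R -> R) :
  (forall y, is_derive f y (f' y)) -> (forall y, f' y < 0) ->
  vanishes_at_infty f -> forall x, 0 < f x.
Proof.
  intros Hd Hsign Hlim x.
  pose proof (antitone_vanishing_nonneg f f' Hd ltac:(intro y; left; auto) Hlim (x + 1)).
  destruct (MVT_cor2 f f' x (x + 1)) as [c [Hc _]];
    [lra | intros; apply is_derive_Reals, Hd |].
  specialize (Hsign c); nra.
Qed.

Lemma exp_sq_dominates a b c : 0 < a ->
  exists N, forall x, N <= x -> b * exp (c * x) < a * exp (x ^ 2 / 2).
Proof.
  intros Ha; destruct (Rle_lt_dec b 0) as [Hb | Hb].
  - exists 0; intros x _; pose proof (exp_pos (c * x)); pose proof (exp_pos (x ^ 2 / 2)); nra.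
  - set (d := Rabs (ln b - ln a)); exists (2 * Rabs c + 2 * d + 2); intros x Hx.
    assert (Hd : 0 <= d) by apply Rabs_pos.
    assert (ln b - ln a <= d) by apply Rle_abs.
    pose proof (Rabs_pos c); pose proof (Rle_abs c); pose proof (Rle_abs (- c)).
    rewrite Rabs_Ropp in *.
    assert (Hlt : ln b + c * x < ln a + x ^ 2 / 2) by nra.
    apply exp_increasing in Hlt; rewrite !exp_plus, !exp_ln in Hlt; auto.
Qed.

Definition gauss (y : R) : R := exp (- y ^ 2 / 2).

Lemma gauss_pos y : 0 < gauss y.
Proof. apply exp_pos. Qed.

Lemma gauss_mul_exp y : gauss y * exp (y ^ 2 / 2) = 1.
Proof.
  unfold gauss; rewrite <- exp_plus.
  replace (- y ^ 2 / 2 + y ^ 2 / 2) with 0 by field; apply exp_0.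
Qed.

Lemma gauss_0 : gauss 0 = 1.
Proof. unfold gauss; replace (- 0 ^ 2 / 2) with 0 by field; apply exp_0. Qed.

Lemma is_derive_gauss y : is_derive gauss y (- y * gauss y).
Proof.
  unfold gauss; auto_derive; [exact I |].
  replace (- (y * (y * 1)) * / 2) with (- y ^ 2 / 2) by field; field.
Qed.

Ltac ex_derive_hyps :=
  repeat split;
  repeat match goal with
  | |- ex_derive _ _ => solve [apply (is_derive_ex_derive _ _ is_derive_gauss)]
  | Hd : forall y, is_derive _ y _ |- ex_derive _ _ => solve [apply (is_derive_ex_derive _ _ Hd)]
  end.

Definition exp_bounded (f : R -> R) : Prop :=
  exists M B A, forall x, M <= x -> Rabs (f x) <= B * exp (A * x).

Lemma exp_bounded_nonneg f : exp_bounded f ->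
  exists M B A, 0 <= M /\ 0 <= B /\ 0 <= A /\
    forall x, M <= x -> Rabs (f x) <= B * exp (A * x).
Proof.
  intros [M [B [A Hf]]]; exists (Rmax M 0), (Rabs B), (Rabs A).
  split; [apply Rmax_r |]; split; [apply Rabs_pos |]; split; [apply Rabs_pos |].
  intros x Hx; pose proof (Rmax_l M 0); pose proof (Rmax_r M 0).
  specialize (Hf x ltac:(lra)); pose proof (Rle_abs B); pose proof (Rle_abs A).
  assert (exp (A * x) <= exp (Rabs A * x)) by (apply exp_le_compat; nra).
  pose proof (exp_pos (A * x)); pose proof (Rabs_pos B); nra.
Qed.

Lemma exp_bounded_ext f g : exp_bounded f -> (forall x, f x = g x) -> exp_bounded g.
Proof. intros [M [B [A Hf]]] Hfg; exists M, B, A; intros x Hx; rewrite <- Hfg; auto. Qed.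

Lemma exp_bounded_const c : exp_bounded (fun _ => c).
Proof. exists 0, (Rabs c), 0; intros; rewrite Rmult_0_l, exp_0; lra. Qed.

Lemma exp_bounded_id : exp_bounded (fun x => x).
Proof.
  exists 0, 1, 1; intros x Hx; rewrite Rabs_right, !Rmult_1_l by lra.
  pose proof (exp_ineq1_le x); lra.
Qed.

Lemma exp_bounded_plus f g :
  exp_bounded f -> exp_bounded g -> exp_bounded (fun x => f x + g x).
Proof.
  intros Hf Hg.
  apply exp_bounded_nonneg in Hf as [M1 [B1 [A1 [HM1 [HB1 [HA1 Hf]]]]]].
  apply exp_bounded_nonneg in Hg as [M2 [B2 [A2 [HM2 [HB2 [HA2 Hg]]]]]].
  exists (Rmax M1 M2), (B1 + B2), (A1 + A2); intros x Hx.
  pose proof (Rmax_l M1 M2); pose proof (Rmax_r M1 M2).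
  specialize (Hf x ltac:(lra)); specialize (Hg x ltac:(lra)).
  assert (exp (A1 * x) <= exp ((A1 + A2) * x)) by (apply exp_le_compat; nra).
  assert (exp (A2 * x) <= exp ((A1 + A2) * x)) by (apply exp_le_compat; nra).
  pose proof (Rabs_triang (f x) (g x)); nra.
Qed.

Lemma exp_bounded_mult f g :
  exp_bounded f -> exp_bounded g -> exp_bounded (fun x => f x * g x).
Proof.
  intros Hf Hg.
  apply exp_bounded_nonneg in Hf as [M1 [B1 [A1 [HM1 [HB1 [HA1 Hf]]]]]].
  apply exp_bounded_nonneg in Hg as [M2 [B2 [A2 [HM2 [HB2 [HA2 Hg]]]]]].
  exists (Rmax M1 M2), (B1 * B2), (A1 + A2); intros x Hx.
  pose proof (Rmax_l M1 M2); pose proof (Rmax_r M1 M2).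
  specialize (Hf x ltac:(lra)); specialize (Hg x ltac:(lra)).
  rewrite Rabs_mult, Rmult_plus_distr_r, exp_plus.
  pose proof (Rabs_pos (f x)); pose proof (Rabs_pos (g x)); pose proof (exp_pos (A1 * x)).
  apply Rle_trans with (B1 * exp (A1 * x) * Rabs (g x)); [apply Rmult_le_compat_r |]; nra.
Qed.

Lemma gauss_mult_vanishing f : exp_bounded f -> vanishes_at_infty (fun y => gauss y * f y).
Proof.
  intros Hf eps Heps.
  apply exp_bounded_nonneg in Hf as [M [B [A [_ [_ [_ Hf]]]]]].
  destruct (exp_sq_dominates eps B A Heps) as [N HN]; exists (Rmax M N); intros y Hy.
  pose proof (Rmax_l M N); pose proof (Rmax_r M N).
  specialize (Hf y ltac:(lra)); specialize (HN y ltac:(lra)).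
  rewrite Rabs_mult, (Rabs_right (gauss y)) by (left; apply gauss_pos).
  pose proof (gauss_pos y); pose proof (gauss_mul_exp y).
  apply Rle_lt_trans with (gauss y * (B * exp (A * y))); [apply Rmult_le_compat_l; lra |].
  apply Rlt_le_trans with (gauss y * (eps * exp (y ^ 2 / 2))); [apply Rmult_lt_compat_l; lra |].
  nra.
Qed.

Lemma Rpower_pos x c : 0 < Rpower x c.
Proof. apply exp_pos. Qed.

Lemma Rpower_pred_mult x c : 0 < x -> Rpower x (c - 1) * x = Rpower x c.
Proof.
  intros Hx; rewrite <- (Rpower_1 x) at 2 by exact Hx.
  rewrite <- Rpower_plus; f_equal; ring.
Qed.

Lemma Rpower_le_exp x c : 1 <= x -> Rpower x c <= exp (Rabs c * x).
Proof.
  intros Hx; unfold Rpower; apply exp_le_compat.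
  assert (0 <= ln x) by (rewrite <- ln_1; apply ln_le; lra).
  pose proof (ln_le_id x ltac:(lra)); pose proof (Rle_abs c); pose proof (Rabs_pos c); nra.
Qed.

Lemma Rpower_doubling_bounds x y c : 0 < x -> x <= y <= 2 * x ->
  exp (- Rabs c * ln 2) * Rpower x c <= Rpower y c <= exp (Rabs c * ln 2) * Rpower x c.
Proof.
  intros Hx Hy; unfold Rpower; rewrite <- !exp_plus.
  assert (ln x <= ln y) by (apply ln_le; lra).
  assert (ln y <= ln 2 + ln x) by (rewrite <- ln_mult by lra; apply ln_le; lra).
  pose proof (Rle_abs c); pose proof (Rle_abs (- c)); rewrite Rabs_Ropp in *.
  split; apply exp_le_compat; nra.
Qed.

Definition power_asymptotic (c : R) (Y : R -> R) : Prop :=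
  forall eps, 0 < eps -> exists M, 0 < M /\
    forall x, M < x -> Rabs (Y x / Rpower x c - 1) < eps.

Lemma power_asymptotic_between c Y : power_asymptotic c Y ->
  exists M, 1 <= M /\ forall x, M <= x -> Rpower x c / 2 < Y x < 2 * Rpower x c.
Proof.
  intros HY; destruct (HY (1 / 2)) as [M [HM HMY]]; [lra |].
  exists (M + 1); split; [lra |]; intros x Hx.
  specialize (HMY x ltac:(lra)); pose proof (Rpower_pos x c).
  apply Rabs_def2 in HMY as [Hup Hlow].
  assert (Y x / Rpower x c * Rpower x c = Y x) by (field; lra).
  split; nra.
Qed.

Lemma power_asymptotic_exp_bounded c Y : power_asymptotic c Y -> exp_bounded Y.
Proof.
  intros HY; destruct (power_asymptotic_between c Y HY) as [M [HM HMY]].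
  exists M, 2, (Rabs c); intros x Hx; specialize (HMY x Hx).
  pose proof (Rpower_le_exp x c ltac:(lra)); pose proof (Rpower_pos x c).
  rewrite Rabs_right; lra.
Qed.

Lemma power_asymptotic_deriv_lower c a Y Y1 Z :
  power_asymptotic (c - 1) Y -> power_asymptotic c Z ->
  (forall y, Y1 y = y * Y y - a * Z y) -> a <> 1 ->
  exists M, 0 < M /\ forall y, M < y -> Rabs (1 - a) / 2 * Rpower y c <= Rabs (Y1 y).
Proof.
  intros HY HZ HY1 Ha.
  pose proof (Rabs_pos a); assert (He : 0 < Rabs (1 - a)) by (apply Rabs_pos_lt; lra).
  set (eps := Rabs (1 - a) / (4 * (1 + Rabs a))).
  assert (Heps : 0 < eps) by (apply Rdiv_lt_0_compat; lra).
  assert (Heps_a : eps * (1 + Rabs a) = Rabs (1 - a) / 4) by (unfold eps; field; lra).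
  destruct (HY eps Heps) as [M1 [HM1 HYM]]; destruct (HZ eps Heps) as [M2 [HM2 HZM]].
  exists (Rmax M1 M2); split; [apply (Rlt_le_trans _ M1); [lra | apply Rmax_l] |].
  intros y Hy; pose proof (Rmax_l M1 M2); pose proof (Rmax_r M1 M2).
  specialize (HYM y ltac:(lra)); specialize (HZM y ltac:(lra)).
  pose proof (Rpower_pred_mult y c ltac:(lra)) as Hpow.
  pose proof (Rpower_pos y (c - 1)); pose proof (Rpower_pos y c).
  set (u := Y y / Rpower y (c - 1)) in *; set (v := Z y / Rpower y c) in *.
  assert (HY1uv : Y1 y = (u - a * v) * Rpower y c).
  { rewrite HY1; unfold u, v; rewrite <- Hpow; field; lra. }
  rewrite HY1uv, Rabs_mult, (Rabs_right (Rpower y c)) by lra.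
  apply Rmult_le_compat_r; [lra |].
  replace (u - a * v) with ((1 - a) + (u - 1) - a * (v - 1)) by ring.
  pose proof (Rabs_triang_inv ((1 - a) + (u - 1)) (a * (v - 1))).
  pose proof (Rabs_triang_inv (1 - a) (- (u - 1))); rewrite Rabs_Ropp in *.
  replace (1 - a - - (u - 1)) with (1 - a + (u - 1)) in * by ring.
  rewrite Rabs_mult in *.
  assert (Rabs a * Rabs (v - 1) <= Rabs a * eps) by (apply Rmult_le_compat_l; lra).
  lra.
Qed.

(* By the mean value theorem on [x, 2x], a derivative of size x^c would make Y move
   by about x^(c+1), while Y itself is only of size x^(c-1). *)
Lemma power_asymptotic_deriv_not_large c d Y Y1 M :
  power_asymptotic (c - 1) Y -> (forall y, is_derive Y y (Y1 y)) -> 0 < d ->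
  ~ (forall y, M < y -> d * Rpower y c <= Rabs (Y1 y)).
Proof.
  intros HY HY1 Hd Hlow.
  destruct (power_asymptotic_between _ _ HY) as [N [HN HNY]].
  set (m := exp (- Rabs c * ln 2)); set (m' := exp (Rabs c * ln 2)).
  assert (Hm : 0 < m) by apply exp_pos; assert (Hm' : 0 < m') by apply exp_pos.
  set (x := Rmax (Rmax M N) ((m' + 2) / (d * m)) + 1).
  pose proof (Rmax_l (Rmax M N) ((m' + 2) / (d * m)));
    pose proof (Rmax_r (Rmax M N) ((m' + 2) / (d * m))).
  pose proof (Rmax_l M N); pose proof (Rmax_r M N).
  assert (HxK : (m' + 2) / (d * m) < x) by (unfold x; lra).
  assert (Hx1 : 1 <= x) by (unfold x; lra).
  destruct (MVT_cor2 Y Y1 x (2 * x)) as [xi [Hmvt Hxi]];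
    [lra | intros; apply is_derive_Reals, HY1 |].
  replace (2 * x - x) with x in Hmvt by ring.
  specialize (Hlow xi ltac:(unfold x in *; lra)).
  destruct (Rpower_doubling_bounds x xi c ltac:(lra) ltac:(lra)) as [Hxi_low _].
  destruct (Rpower_doubling_bounds x (2 * x) c ltac:(lra) ltac:(lra)) as [_ H2x_up].
  fold m m' in Hxi_low, H2x_up.
  pose proof (HNY x ltac:(unfold x in *; lra)); pose proof (HNY (2 * x) ltac:(unfold x in *; lra)).
  pose proof (Rpower_pred_mult x c ltac:(lra)); pose proof (Rpower_pred_mult (2 * x) c ltac:(lra)).
  pose proof (Rpower_pos x c); pose proof (Rpower_pos x (c - 1));
    pose proof (Rpower_pos (2 * x) (c - 1)).
  assert (Hvar : Rabs (Y1 xi) * x < 2 * Rpower (2 * x) (c - 1) + 2 * Rpower x (c - 1)).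
  { replace (Rabs (Y1 xi) * x) with (Rabs (Y (2 * x) - Y x))
      by (rewrite Hmvt, Rabs_mult, (Rabs_right x) by lra; reflexivity).
    apply Rabs_def1; lra. }
  assert (Hsq : d * m * Rpower x c * x * x < (m' + 2) * Rpower x c).
  { assert (d * m * Rpower x c <= Rabs (Y1 xi)) by (apply (Rle_trans _ (d * Rpower xi c)); nra).
    nra. }
  assert (Hdm : 0 < d * m) by nra.
  assert (m' + 2 < d * m * x).
  { apply (Rmult_lt_reg_r (/ (d * m))); [apply Rinv_0_lt_compat; lra |].
    replace (d * m * x * / (d * m)) with x by (field; lra); exact HxK. }
  assert (m' + 2 <= d * m * x * x) by nra.
  assert (0 <= (d * m * x * x - (m' + 2)) * Rpower x c) by (apply Rmult_le_pos; lra).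
  nra.
Qed.

Lemma power_asymptotic_recurrence_coef c a Y Y1 Z :
  power_asymptotic (c - 1) Y -> power_asymptotic c Z -> (forall y, is_derive Y y (Y1 y)) ->
  (forall y, Y1 y = y * Y y - a * Z y) -> a = 1.
Proof.
  intros HY HZ HY1 Hrec; destruct (Req_dec a 1) as [Ha | Ha]; [exact Ha | exfalso].
  destruct (power_asymptotic_deriv_lower c a Y Y1 Z HY HZ Hrec Ha) as [M [_ Hlow]].
  apply (power_asymptotic_deriv_not_large c (Rabs (1 - a) / 2) Y Y1 M HY HY1); [| exact Hlow].
  assert (0 < Rabs (1 - a)) by (apply Rabs_pos_lt; lra); lra.
Qed.

Definition hermite_ode (c : R) (Y Y1 Y2 : R -> R) : Prop :=
  (forall x, is_derive Y x (Y1 x)) /\ (forall x, is_derive Y1 x (Y2 x)) /\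
  (forall x, Y2 x = x * Y1 x - c * Y x).

Lemma is_hermite_ode c Y : is_hermite c Y ->
  exists Y1 Y2, hermite_ode c Y Y1 Y2 /\ power_asymptotic c Y.
Proof.
  intros [Y1 [Y2 [HY [HY1 [Hode Hasym]]]]]; exists Y1, Y2; split; [| exact Hasym].
  split; [| split].
  - intro x; apply is_derive_Reals, HY.
  - intro x; apply is_derive_Reals, HY1.
  - intro x; specialize (Hode x); lra.
Qed.

Lemma hermite_ode_scal c a Y Y1 Y2 : hermite_ode c Y Y1 Y2 ->
  hermite_ode c (fun x => a * Y x) (fun x => a * Y1 x) (fun x => a * Y2 x).
Proof.
  intros [HY [HY1 Hode]]; split; [| split].
  - intro x; apply (is_derive_scal Y), HY.
  - intro x; apply (is_derive_scal Y1), HY1.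
  - intro x; rewrite Hode; ring.
Qed.

Lemma hermite_ode_plus c Y Y1 Y2 D D1 D2 : hermite_ode c Y Y1 Y2 -> hermite_ode c D D1 D2 ->
  hermite_ode c (fun x => Y x + D x) (fun x => Y1 x + D1 x) (fun x => Y2 x + D2 x).
Proof.
  intros [HY [HY1 HYode]] [HD [HD1 HDode]]; split; [| split].
  - intro x; apply (is_derive_plus Y D); auto.
  - intro x; apply (is_derive_plus Y1 D1); auto.
  - intro x; rewrite HYode, HDode; ring.
Qed.

Lemma hermite_ode_raise c Y Y1 Y2 : hermite_ode c Y Y1 Y2 ->
  hermite_ode (c + 1) (fun x => x * Y x - Y1 x) (fun x => (c + 1) * Y x) (fun x => (c + 1) * Y1 x).
Proof.
  intros [HY [HY1 Hode]]; split; [| split].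
  - intro x; auto_derive; [ex_derive_hyps |].
    rewrite (Derive_is_derive _ _ HY), (Derive_is_derive _ _ HY1), Hode; ring.
  - intro x; auto_derive; [ex_derive_hyps |].
    rewrite (Derive_is_derive _ _ HY); ring.
  - intro x; ring.
Qed.

Lemma gronwall_vanish (E E' : R -> R) K x0 x :
  (forall y, is_derive E y (E' y)) -> (forall y, 0 <= E y) -> E x0 = 0 ->
  (forall y, Rmin x0 x <= y <= Rmax x0 x -> Rabs (E' y) <= K * E y) -> E x = 0.
Proof.
  intros HE Hpos HE0 Hbound.
  enough (E x <= 0) by (specialize (Hpos x); lra).
  destruct (Rle_lt_dec x0 x) as [Hle | Hlt].
  - rewrite Rmin_left, Rmax_right in Hbound by lra.
    assert (Hmono : E x * exp (- K * x) <= E x0 * exp (- K * x0)).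
    { apply (derive_nonpos_le (fun y => E y * exp (- K * y))
               (fun y => (E' y - K * E y) * exp (- K * y))); [| exact Hle |].
      - intros y _; auto_derive; [ex_derive_hyps |].
        rewrite (Derive_is_derive _ _ HE); ring.
      - intros y Hy; pose proof (proj1 (Rabs_le_between _ _) (Hbound y Hy)).
        pose proof (exp_pos (- K * y)); nra. }
    rewrite HE0 in Hmono; pose proof (exp_pos (- K * x)); nra.
  - rewrite Rmin_right, Rmax_left in Hbound by lra.
    assert (Hmono : E x * exp (K * x) <= E x0 * exp (K * x0)).
    { apply (derive_nonneg_le (fun y => E y * exp (K * y))
               (fun y => (E' y + K * E y) * exp (K * y))); [| lra |].
      - intros y _; auto_derive; [ex_derive_hyps |].
        rewrite (Derive_is_derive _ _ HE); ring.
      - intros y Hy; pose proof (proj1 (Rabs_le_between _ _) (Hbound y Hy)).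
        pose proof (exp_pos (K * y)); nra. }
    rewrite HE0 in Hmono; pose proof (exp_pos (K * x)); nra.
Qed.

(* The energy [D^2 + D1^2] has logarithmic derivative bounded on compacts. *)
Lemma hermite_ode_zero c D D1 D2 x0 : hermite_ode c D D1 D2 ->
  D x0 = 0 -> D1 x0 = 0 -> forall x, D x = 0.
Proof.
  intros [HD [HD1 Hode]] HDx0 HD1x0 x.
  set (r := Rabs x + Rabs x0 + 1).
  assert (HE : forall y, is_derive (fun z => D z ^ 2 + D1 z ^ 2) y
                 (2 * D y * D1 y + 2 * D1 y * D2 y)).
  { intro y; auto_derive; [ex_derive_hyps |].
    rewrite (Derive_is_derive _ _ HD), (Derive_is_derive _ _ HD1); ring. }
  assert (Henergy : D x ^ 2 + D1 x ^ 2 = 0).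
  { apply (gronwall_vanish _ _ (1 + Rabs c + 2 * r) x0 x HE).
    - intro y; pose proof (pow2_ge_0 (D y)); pose proof (pow2_ge_0 (D1 y)); lra.
    - rewrite HDx0, HD1x0; ring.
    - intros y Hy; rewrite Hode.
      assert (Hyr : - r <= y <= r).
      { unfold r; pose proof (Rle_abs x); pose proof (Rle_abs (- x)); pose proof (Rle_abs x0);
          pose proof (Rle_abs (- x0)); rewrite !Rabs_Ropp in *.
        pose proof (Rmin_l x0 x); pose proof (Rmin_r x0 x); pose proof (Rmax_l x0 x);
          pose proof (Rmax_r x0 x).
        destruct (Rle_dec x0 x);
          [rewrite Rmin_left, Rmax_right in Hy | rewrite Rmin_right, Rmax_left in Hy]; lra. }
      pose proof (Rle_abs c); pose proof (Rle_abs (- c)); rewrite Rabs_Ropp in *.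
      pose proof (pow2_ge_0 (D y - D1 y)); pose proof (pow2_ge_0 (D y + D1 y)).
      pose proof (pow2_ge_0 (D y)); pose proof (pow2_ge_0 (D1 y)).
      apply Rabs_le; split; nra. }
  pose proof (pow2_ge_0 (D x)); pose proof (pow2_ge_0 (D1 x)); nra.
Qed.

Lemma fast_derive_not_exp_bounded (Y Y1 : R -> R) d x :
  (forall y, is_derive Y y (Y1 y)) -> 0 < d ->
  (forall y, x <= y -> d * exp (y ^ 2 / 2) <= Y1 y) -> ~ exp_bounded Y.
Proof.
  intros HY Hd Hfast Hbnd.
  apply exp_bounded_nonneg in Hbnd as [M [B [A [HM [HB [HA Hbnd]]]]]].
  destruct (exp_sq_dominates d (2 * B * exp A) A Hd) as [N HN].
  set (y := Rmax (Rmax M x) N).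
  pose proof (Rmax_l (Rmax M x) N); pose proof (Rmax_r (Rmax M x) N);
    pose proof (Rmax_l M x); pose proof (Rmax_r M x).
  destruct (MVT_cor2 Y Y1 y (y + 1)) as [xi [Hmvt Hxi]];
    [lra | intros; apply is_derive_Reals, HY |].
  replace (y + 1 - y) with 1 in Hmvt by ring.
  specialize (Hfast xi ltac:(unfold y in *; lra)).
  assert (exp (y ^ 2 / 2) <= exp (xi ^ 2 / 2)) by (apply exp_le_compat; unfold y in *; nra).
  pose proof (Hbnd y ltac:(unfold y in *; lra));
    pose proof (Hbnd (y + 1) ltac:(unfold y in *; lra)).
  pose proof (Rle_abs (Y y)); pose proof (Rle_abs (- Y y)); rewrite Rabs_Ropp in *.
  pose proof (Rle_abs (Y (y + 1))).
  specialize (HN y ltac:(unfold y in *; lra)).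
  rewrite Rmult_plus_distr_l, Rmult_1_r, exp_plus in *.
  pose proof (exp_pos (A * y)); pose proof (exp_pos A).
  assert (exp (A * y) <= exp A * exp (A * y)) by (pose proof (exp_ineq1_le A); nra).
  nra.
Qed.

Definition exp_bounded_above (f : R -> R) : Prop :=
  exists M B A, forall x, M <= x -> f x <= B * exp (A * x).

Lemma exp_bounded_above_opp f :
  exp_bounded_above f -> exp_bounded_above (fun x => - f x) -> exp_bounded f.
Proof.
  intros [M1 [B1 [A1 Hup]]] [M2 [B2 [A2 Hlow]]].
  exists (Rmax (Rmax M1 M2) 0), (Rabs B1 + Rabs B2), (Rabs A1 + Rabs A2); intros x Hx.
  pose proof (Rmax_l (Rmax M1 M2) 0); pose proof (Rmax_r (Rmax M1 M2) 0);
    pose proof (Rmax_l M1 M2); pose proof (Rmax_r M1 M2).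
  specialize (Hup x ltac:(lra)); specialize (Hlow x ltac:(lra)).
  pose proof (Rle_abs A1); pose proof (Rle_abs A2);
    pose proof (Rle_abs B1); pose proof (Rle_abs B2).
  pose proof (Rabs_pos A1); pose proof (Rabs_pos A2);
    pose proof (Rabs_pos B1); pose proof (Rabs_pos B2).
  assert (exp (A1 * x) <= exp ((Rabs A1 + Rabs A2) * x)) by (apply exp_le_compat; nra).
  assert (exp (A2 * x) <= exp ((Rabs A1 + Rabs A2) * x)) by (apply exp_le_compat; nra).
  pose proof (exp_pos (A1 * x)); pose proof (exp_pos (A2 * x)).
  apply Rabs_le; split; nra.
Qed.

(* Comparison of [gauss * Y1], whose derivative is [- c * gauss * Y], with the
   barrier [K * exp (A y) * gauss y]: crossing the barrier forces [Y1 >= d e^(y^2/2)]. *)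
Lemma hermite_ode_deriv_bounded_above c Y Y1 Y2 :
  hermite_ode c Y Y1 Y2 -> exp_bounded Y -> exp_bounded_above Y1.
Proof.
  intros Hode HYbnd; pose proof Hode as [HY [HY1 HY2]].
  destruct (exp_bounded_nonneg Y HYbnd) as [M [B [A [HM [HB [HA Hbnd]]]]]].
  set (K := Rabs c * B).
  assert (HK : 0 <= K) by (unfold K; pose proof (Rabs_pos c); nra).
  exists (Rmax M (A + 1)), K, A; intros x Hx.
  pose proof (Rmax_l M (A + 1)); pose proof (Rmax_r M (A + 1)).
  destruct (Rle_lt_dec (Y1 x) (K * exp (A * x))) as [Hle | Hgt]; [exact Hle | exfalso].
  set (h := fun y => gauss y * Y1 y - K * exp (A * y) * gauss y).
  set (h' := fun y => - c * gauss y * Y y - K * (A - y) * exp (A * y) * gauss y).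
  assert (Hh : forall y, is_derive h y (h' y)).
  { intro y; unfold h, h'; auto_derive; [ex_derive_hyps |].
    rewrite (Derive_is_derive _ _ is_derive_gauss), (Derive_is_derive _ _ HY1), HY2; ring. }
  assert (Hh' : forall y, x <= y -> 0 <= h' y).
  { intros y Hy; unfold h'.
    pose proof (Hbnd y ltac:(lra)) as HYy; pose proof (gauss_pos y); pose proof (exp_pos (A * y)).
    assert (Rabs (c * Y y) <= K * exp (A * y))
      by (rewrite Rabs_mult; unfold K; pose proof (Rabs_pos c); nra).
    pose proof (Rle_abs (c * Y y)).
    assert (0 <= K * exp (A * y) * (y - A - 1))
      by (apply Rmult_le_pos; [apply Rmult_le_pos |]; lra).
    replace (- c * gauss y * Y y - K * (A - y) * exp (A * y) * gauss y)
      with (gauss y * (- (c * Y y) + K * (y - A) * exp (A * y))) by ring.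
    apply Rmult_le_pos; nra. }
  set (d := h x).
  assert (Hd : 0 < d).
  { unfold d, h; replace (gauss x * Y1 x - K * exp (A * x) * gauss x)
      with (gauss x * (Y1 x - K * exp (A * x))) by ring.
    apply Rmult_lt_0_compat; [apply gauss_pos | lra]. }
  apply (fast_derive_not_exp_bounded Y Y1 d x HY Hd); [| exact HYbnd].
  intros y Hy.
  assert (Hhy : d <= h y) by (apply (derive_nonneg_le h h'); auto; intros z Hz; apply Hh'; lra).
  unfold h in Hhy; pose proof (gauss_mul_exp y); pose proof (gauss_pos y);
    pose proof (exp_pos (A * y)); pose proof (exp_pos (y ^ 2 / 2)).
  assert (0 <= K * exp (A * y) * gauss y) by (apply Rmult_le_pos; [apply Rmult_le_pos |]; lra).
  assert (d * exp (y ^ 2 / 2) <= gauss y * Y1 y * exp (y ^ 2 / 2))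
    by (apply Rmult_le_compat_r; nra).
  replace (gauss y * Y1 y * exp (y ^ 2 / 2)) with (Y1 y * (gauss y * exp (y ^ 2 / 2))) in * by ring.
  nra.
Qed.

Lemma hermite_ode_deriv_exp_bounded c Y Y1 Y2 :
  hermite_ode c Y Y1 Y2 -> exp_bounded Y -> exp_bounded Y1.
Proof.
  intros Hode HYbnd; apply exp_bounded_above_opp.
  - exact (hermite_ode_deriv_bounded_above c Y Y1 Y2 Hode HYbnd).
  - destruct (hermite_ode_deriv_bounded_above c _ _ _ (hermite_ode_scal c (-1) Y Y1 Y2 Hode))
      as [M [B [A Hup]]].
    + apply (exp_bounded_ext (fun x => (-1) * Y x)); [| intro; ring].
      apply exp_bounded_mult; [apply exp_bounded_const | exact HYbnd].
    + exists M, B, A; intros x Hx; specialize (Hup x Hx); lra.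
Qed.

Lemma hermite_wronskian_gauss c Y Y1 Y2 D D1 D2 :
  hermite_ode c Y Y1 Y2 -> hermite_ode c D D1 D2 ->
  forall y, gauss y * (Y y * D1 y - Y1 y * D y) = Y 0 * D1 0 - Y1 0 * D 0.
Proof.
  intros [HY [HY1 HYode]] [HD [HD1 HDode]] y.
  rewrite <- (Rmult_1_l (Y 0 * _ - _)), <- gauss_0.
  apply (derive_zero_const (fun z => gauss z * (Y z * D1 z - Y1 z * D z))); intro z.
  auto_derive; [ex_derive_hyps |].
  rewrite (Derive_is_derive _ _ is_derive_gauss), (Derive_is_derive _ _ HY),
    (Derive_is_derive _ _ HY1), (Derive_is_derive _ _ HD), (Derive_is_derive _ _ HD1),
    HYode, HDode; ring.
Qed.

(* The Wronskian is a multiple of [e^(y^2/2)] yet exponentially bounded, so it vanishes. *)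
Lemma hermite_ode_exp_bounded_proportional c Y Y1 Y2 D D1 D2 x0 :
  hermite_ode c Y Y1 Y2 -> hermite_ode c D D1 D2 -> exp_bounded Y -> exp_bounded D ->
  Y x0 <> 0 -> forall x, D x = D x0 / Y x0 * Y x.
Proof.
  intros HYode HDode HYbnd HDbnd HYx0.
  set (W0 := Y 0 * D1 0 - Y1 0 * D 0).
  assert (HW : forall y, gauss y * (Y y * D1 y - Y1 y * D y) = W0)
    by exact (hermite_wronskian_gauss c Y Y1 Y2 D D1 D2 HYode HDode).
  assert (HWbnd : exp_bounded (fun y => Y y * D1 y - Y1 y * D y)).
  { apply (exp_bounded_ext (fun y => Y y * D1 y + (-1) * (Y1 y * D y))); [| intro; ring].
    apply exp_bounded_plus; apply exp_bounded_mult;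
      eauto using exp_bounded_const, exp_bounded_mult, hermite_ode_deriv_exp_bounded. }
  assert (HW0 : W0 = 0).
  { apply Rabs_eq_0, Rle_antisym; [| apply Rabs_pos].
    apply Rnot_lt_le; intros Hpos.
    destruct (gauss_mult_vanishing _ HWbnd _ Hpos) as [N HN].
    specialize (HN N (Rle_refl N)); rewrite HW in HN; lra. }
  set (a := D x0 / Y x0).
  pose proof (hermite_ode_plus c _ _ _ _ _ _ HDode (hermite_ode_scal c (- a) Y Y1 Y2 HYode))
    as HEode.
  intro x.
  enough (D x + - a * Y x = 0) by lra.
  apply (hermite_ode_zero c _ _ _ x0 HEode); unfold a.
  - field; exact HYx0.
  - specialize (HW x0); rewrite HW0 in HW; pose proof (gauss_pos x0).
    assert (Hw : Y x0 * D1 x0 - Y1 x0 * D x0 = 0) by nra.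
    transitivity ((Y x0 * D1 x0 - Y1 x0 * D x0) / Y x0); [field; exact HYx0 |].
    rewrite Hw; unfold Rdiv; ring.
Qed.

Lemma hermite_lowering c Y Y1 Y2 Z Z1 Z2 :
  hermite_ode (c - 1) Y Y1 Y2 -> power_asymptotic (c - 1) Y ->
  hermite_ode c Z Z1 Z2 -> power_asymptotic c Z ->
  forall x, Z x = x * Y x - Y1 x.
Proof.
  intros HYode HYasym HZode HZasym.
  pose proof (hermite_ode_raise _ _ _ _ HYode) as HFode.
  replace (c - 1 + 1) with c in HFode by ring.
  assert (HFbnd : exp_bounded (fun x => x * Y x - Y1 x)).
  { apply (exp_bounded_ext (fun x => x * Y x + (-1) * Y1 x)); [| intro; ring].
    apply exp_bounded_plus; apply exp_bounded_mult;
      eauto using exp_bounded_id, exp_bounded_const, power_asymptotic_exp_bounded,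
        hermite_ode_deriv_exp_bounded. }
  destruct (power_asymptotic_between _ _ HZasym) as [M [HM HMZ]].
  assert (HZM : Z M <> 0)
    by (destruct (HMZ M (Rle_refl M)); pose proof (Rpower_pos M c); lra).
  pose proof (hermite_ode_exp_bounded_proportional c _ _ _ _ _ _ M HZode HFode
                (power_asymptotic_exp_bounded c Z HZasym) HFbnd HZM) as Hprop.
  set (a := (M * Y M - Y1 M) / Z M) in Hprop.
  assert (Ha : a = 1).
  { destruct HYode as [HY _].
    apply (power_asymptotic_recurrence_coef c a Y Y1 Z HYasym HZasym HY).
    intro y; specialize (Hprop y); lra. }
  intro x; specialize (Hprop x); rewrite Ha in Hprop; lra.
Qed.

Lemma hermite_recurrences k Hm H Hp :
  is_hermite (k - 1) Hm -> is_hermite k H -> is_hermite (k + 1) Hp ->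
  (forall y, is_derive H y (k * Hm y)) /\ (forall y, is_derive Hm y (y * Hm y - H y)) /\
  (forall y, Hp y = y * H y - k * Hm y) /\
  power_asymptotic k H /\ power_asymptotic (k - 1) Hm.
Proof.
  intros HmHerm HHerm HpHerm.
  destruct (is_hermite_ode _ _ HmHerm) as [Hm1 [Hm2 [HmOde HmAsym]]].
  destruct (is_hermite_ode _ _ HHerm) as [H1 [H2 [HOde HAsym]]].
  destruct (is_hermite_ode _ _ HpHerm) as [Hp1 [Hp2 [HpOde HpAsym]]].
  pose proof (hermite_lowering k _ _ _ _ _ _ HmOde HmAsym HOde HAsym) as HHm.
  assert (HOde1 : hermite_ode (k + 1 - 1) H H1 H2) by now replace (k + 1 - 1) with k by ring.
  assert (HAsym1 : power_asymptotic (k + 1 - 1) H) by now replace (k + 1 - 1) with k by ring.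
  pose proof (hermite_lowering (k + 1) _ _ _ _ _ _ HOde1 HAsym1 HpOde HpAsym) as HpH.
  destruct HmOde as [DHm [DHm1 HmEq]]; destruct HOde as [DH _].
  assert (HH1 : forall y, H1 y = k * Hm y).
  { intro y; rewrite <- (is_derive_unique _ _ _ (DH y)).
    apply is_derive_unique, (is_derive_ext (fun z => z * Hm z - Hm1 z));
      [intro z; rewrite HHm; reflexivity |].
    auto_derive; [ex_derive_hyps |].
    rewrite (Derive_is_derive _ _ DHm), (Derive_is_derive _ _ DHm1), HmEq; ring. }
  split; [| split; [| split; [| split]]]; auto.
  - intro y; rewrite <- HH1; apply DH.
  - intro y; replace (y * Hm y - H y) with (Hm1 y) by (rewrite HHm; ring); apply DHm.
  - intro y; rewrite HpH, HH1; reflexivity.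
Qed.

Section Turan.

Variables (k : R) (Hm H : R -> R).
Hypothesis H_deriv : forall y, is_derive H y (k * Hm y).
Hypothesis Hm_deriv : forall y, is_derive Hm y (y * Hm y - H y).
Hypothesis H_asym : power_asymptotic k H.
Hypothesis Hm_asym : power_asymptotic (k - 1) Hm.

(* [H^2 - Hm * Hp] rewritten with the recurrence [Hp = y H - k Hm]. *)
Definition turan (y : R) : R := H y ^ 2 - y * H y * Hm y + k * Hm y ^ 2.

Lemma is_derive_gauss_turan y :
  is_derive (fun z => gauss z * turan z) y (- gauss y * H y * Hm y).
Proof.
  unfold turan; auto_derive; [ex_derive_hyps |].
  rewrite (Derive_is_derive _ _ is_derive_gauss), (Derive_is_derive _ _ H_deriv),
    (Derive_is_derive _ _ Hm_deriv); ring.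
Qed.

Lemma gauss_turan_vanishing : vanishes_at_infty (fun y => gauss y * turan y).
Proof.
  apply gauss_mult_vanishing; unfold turan.
  apply (exp_bounded_ext (fun y => H y * H y + ((-1) * (y * (H y * Hm y)) + k * (Hm y * Hm y))));
    [| intro; ring].
  pose proof (power_asymptotic_exp_bounded _ _ H_asym);
    pose proof (power_asymptotic_exp_bounded _ _ Hm_asym).
  repeat apply exp_bounded_plus; repeat apply exp_bounded_mult;
    auto using exp_bounded_id, exp_bounded_const.
Qed.

Lemma hermite_eventually_pos : exists M, 1 <= M /\ forall y, M <= y -> 0 < H y /\ 0 < Hm y.
Proof.
  destruct (power_asymptotic_between _ _ H_asym) as [M1 [HM1 HH]].
  destruct (power_asymptotic_between _ _ Hm_asym) as [M2 [HM2 HHm]].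
  exists (Rmax M1 M2); split; [apply (Rle_trans _ M1); [lra | apply Rmax_l] |]; intros y Hy.
  pose proof (Rmax_l M1 M2); pose proof (Rmax_r M1 M2).
  destruct (HH y ltac:(lra)); destruct (HHm y ltac:(lra)).
  pose proof (Rpower_pos y k); pose proof (Rpower_pos y (k - 1)); lra.
Qed.

Lemma hermite_no_common_zero y : H y = 0 -> Hm y = 0 -> False.
Proof.
  intros HHy HHmy.
  assert (Hode : hermite_ode k H (fun z => k * Hm z) (fun z => k * (z * Hm z - H z))).
  { split; [exact H_deriv | split; [| intro z; ring]].
    intro z; apply (is_derive_scal Hm), Hm_deriv. }
  pose proof (hermite_ode_zero k _ _ _ y Hode HHy ltac:(cbv beta; rewrite HHmy; ring)) as HH0.
  destruct hermite_eventually_pos as [M [_ HM]].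
  destruct (HM M (Rle_refl M)) as [HHM _]; rewrite HH0 in HHM; lra.
Qed.

(* For [k <= 0], [gauss * H * Hm] has derivative [gauss * (k Hm^2 - H^2) <= 0] and
   vanishes at infinity, while it is positive far out. *)
Lemma hermite_product_pos : k <= 0 -> forall y, 0 < H y * Hm y.
Proof.
  intros Hk y.
  set (p := fun z => gauss z * (H z * Hm z)).
  set (p' := fun z => gauss z * (k * Hm z ^ 2 - H z ^ 2)).
  assert (Hp : forall z, is_derive p z (p' z)).
  { intro z; unfold p, p'; auto_derive; [ex_derive_hyps |].
    rewrite (Derive_is_derive _ _ is_derive_gauss), (Derive_is_derive _ _ H_deriv),
      (Derive_is_derive _ _ Hm_deriv); ring. }
  assert (Hp' : forall z, p' z <= 0).
  { intro z; unfold p'; pose proof (gauss_pos z).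
    pose proof (pow2_ge_0 (Hm z)); pose proof (pow2_ge_0 (H z)).
    assert (k * Hm z ^ 2 - H z ^ 2 <= 0) by nra; nra. }
  destruct hermite_eventually_pos as [M [_ HM]].
  set (z := Rmax y M); pose proof (Rmax_l y M); pose proof (Rmax_r y M).
  destruct (HM z ltac:(unfold z; lra)) as [HHz HHmz].
  assert (Hpz : 0 < p z) by (unfold p; pose proof (gauss_pos z); apply Rmult_lt_0_compat; nra).
  assert (p z <= p y) by (apply (derive_nonpos_le p p'); auto).
  unfold p in *; pose proof (gauss_pos y); nra.
Qed.

Lemma turan_pos_of_nonpos : k <= 0 -> forall x, 0 < turan x.
Proof.
  intros Hk x.
  assert (0 < gauss x * turan x).
  { apply (decreasing_vanishing_pos _ (fun y => - gauss y * H y * Hm y) is_derive_gauss_turan);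
      [| exact gauss_turan_vanishing].
    intro y; pose proof (gauss_pos y); pose proof (hermite_product_pos Hk y); nra. }
  pose proof (gauss_pos x); nra.
Qed.

Lemma turan_nonpos_sign : 0 < k -> forall y, turan y <= 0 -> 0 < y * H y * Hm y.
Proof.
  intros Hk y Hy; unfold turan in Hy.
  enough (0 < H y ^ 2 + k * Hm y ^ 2) by lra.
  pose proof (pow2_ge_0 (H y)); pose proof (pow2_ge_0 (Hm y)).
  destruct (Req_dec (H y) 0) as [HH0 | HH0].
  - destruct (Req_dec (Hm y) 0) as [HHm0 | HHm0];
      [exfalso; exact (hermite_no_common_zero y HH0 HHm0) |].
    assert (0 < Hm y ^ 2) by (apply pow2_gt_0; exact HHm0); nra.
  - assert (0 < H y ^ 2) by (apply pow2_gt_0; exact HH0); nra.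
Qed.

Lemma turan_pos_left : 0 < k -> forall L x, H L = 0 -> L <= x -> x < 0 -> 0 < turan x.
Proof.
  intros Hk L x HL HLx Hx.
  destruct (Rlt_le_dec 0 (turan x)) as [Hpos | Hnonpos]; [exact Hpos | exfalso].
  pose proof (turan_nonpos_sign Hk x Hnonpos) as Hsx.
  destruct (Rle_lt_or_eq_dec _ _ HLx) as [HLlt | <-]; [| rewrite HL in Hsx; lra].
  assert (gauss L * turan L < 0).
  { apply (nonpos_trap_left _ (fun y => - gauss y * H y * Hm y) L x is_derive_gauss_turan HLlt).
    - pose proof (gauss_pos x); nra.
    - intros y Hy Hgy; pose proof (gauss_pos y).
      assert (turan y <= 0) by nra.
      pose proof (turan_nonpos_sign Hk y ltac:(assumption)).
      assert (H y * Hm y < 0) by nra; nra. }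
  assert (0 <= turan L) by (unfold turan; rewrite HL; pose proof (pow2_ge_0 (Hm L)); nra).
  pose proof (gauss_pos L); nra.
Qed.

Lemma turan_neg_forward :
  0 < k -> forall x, 0 < x -> turan x <= 0 -> forall y, x < y -> turan y < 0.
Proof.
  intros Hk x Hx Htx y Hxy.
  assert (gauss y * turan y < 0).
  { apply (nonpos_trap_right _ (fun z => - gauss z * H z * Hm z) x y is_derive_gauss_turan Hxy).
    - pose proof (gauss_pos x); nra.
    - intros z Hz Hgz; pose proof (gauss_pos z).
      assert (turan z <= 0) by nra.
      pose proof (turan_nonpos_sign Hk z ltac:(assumption)).
      assert (0 < H z * Hm z) by nra; nra. }
  pose proof (gauss_pos y); nra.
Qed.

Lemma hermite_ratio_eventually_small : exists N, forall w, N <= w -> 0 < H w /\ w * Hm w < 4 * H w.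
Proof.
  destruct (power_asymptotic_between _ _ H_asym) as [M1 [HM1 HH]].
  destruct (power_asymptotic_between _ _ Hm_asym) as [M2 [HM2 HHm]].
  exists (Rmax M1 M2); intros w Hw; pose proof (Rmax_l M1 M2); pose proof (Rmax_r M1 M2).
  destruct (HH w ltac:(lra)); destruct (HHm w ltac:(lra)).
  pose proof (Rpower_pred_mult w k ltac:(lra)); pose proof (Rpower_pos w k).
  split; nra.
Qed.

(* If [turan] were [<= 0] at some [x > 0], then [Hm / H], whose derivative is
   [- turan / H^2], would increase on [x, +oo), whereas [w Hm(w) / H(w)] stays below 4. *)
Lemma turan_pos_right : 0 < k -> forall x, 0 < x -> 0 < turan x.
Proof.
  intros Hk x Hx; destruct (Rlt_le_dec 0 (turan x)) as [Hpos | Htx]; [exact Hpos | exfalso].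
  pose proof (turan_neg_forward Hk x Hx Htx) as Hneg.
  assert (Hprod : forall y, x < y -> 0 < H y * Hm y)
    by (intros y Hy; pose proof (turan_nonpos_sign Hk y (Rlt_le _ _ (Hneg y Hy))); nra).
  assert (HH0 : forall y, x < y -> H y <> 0)
    by (intros y Hy HHy; specialize (Hprod y Hy); rewrite HHy in Hprod; lra).
  set (r := fun y => Hm y / H y).
  assert (Hr : forall y, x < y -> is_derive r y (- turan y / H y ^ 2)).
  { intros y Hy; unfold r, turan; auto_derive; [ex_derive_hyps; apply HH0, Hy |].
    rewrite (Derive_is_derive _ _ H_deriv), (Derive_is_derive _ _ Hm_deriv).
    field; apply HH0, Hy. }
  set (x1 := x + 1).
  assert (Hr1 : 0 < r x1).
  { unfold r; specialize (Hprod x1 ltac:(unfold x1; lra));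
      pose proof (HH0 x1 ltac:(unfold x1; lra)).
    replace (Hm x1 / H x1) with (H x1 * Hm x1 / H x1 ^ 2) by (field; assumption).
    apply Rdiv_lt_0_compat; [exact Hprod | apply pow2_gt_0; assumption]. }
  destruct hermite_ratio_eventually_small as [N HN].
  set (w := Rmax (Rmax (x1 + 1) N) (4 / r x1 + 1)).
  pose proof (Rmax_l (Rmax (x1 + 1) N) (4 / r x1 + 1));
    pose proof (Rmax_r (Rmax (x1 + 1) N) (4 / r x1 + 1));
    pose proof (Rmax_l (x1 + 1) N); pose proof (Rmax_r (x1 + 1) N).
  assert (Hincr : r x1 < r w).
  { destruct (MVT_cor2 r (fun y => - turan y / H y ^ 2) x1 w) as [xi [Hmvt Hxi]];
      [unfold w, x1 in *; lra | intros; apply is_derive_Reals, Hr; unfold x1 in *; lra |].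
    assert (turan xi < 0) by (apply Hneg; unfold x1 in *; lra).
    assert (0 < H xi ^ 2) by (apply pow2_gt_0, HH0; unfold x1 in *; lra).
    assert (0 < - turan xi / H xi ^ 2) by (apply Rdiv_lt_0_compat; lra).
    assert (x1 < w) by (unfold w; lra); nra. }
  destruct (HN w ltac:(unfold w; lra)) as [HHw Hsmall].
  assert (Hrw : r w * w < 4).
  { apply (Rmult_lt_reg_r (H w)); [exact HHw |].
    unfold r; replace (Hm w / H w * w * H w) with (w * Hm w) by (field; lra); lra. }
  assert (4 < r x1 * w).
  { apply (Rmult_lt_reg_r (/ r x1)); [apply Rinv_0_lt_compat; exact Hr1 |].
    replace (r x1 * w * / r x1) with w by (field; lra).
    unfold w in *; unfold Rdiv in *; lra. }
  assert (0 < w) by (unfold w, x1 in *; lra); nra.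
Qed.

Lemma turan_pos_of_pos : 0 < k -> forall L x, H L = 0 -> L <= x -> 0 < turan x.
Proof.
  intros Hk L x HL HLx; destruct (Rtotal_order x 0) as [Hx | [-> | Hx]].
  - exact (turan_pos_left Hk L x HL HLx Hx).
  - destruct (Rlt_le_dec 0 (turan 0)) as [Hpos | Hnonpos]; [exact Hpos |].
    pose proof (turan_nonpos_sign Hk 0 Hnonpos); lra.
  - exact (turan_pos_right Hk x Hx).
Qed.

End Turan.

Theorem lemma2 :
  forall (k : R) (Hm H Hp : R -> R),
    is_hermite (k - 1) Hm -> is_hermite k H -> is_hermite (k + 1) Hp ->
    forall x : R,
      (k <= 0 \/ (0 < k /\ exists L, leftmost_zero H L /\ L <= x)) ->
      H x ^ 2 - Hm x * Hp x > 0.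
Proof.
  intros k Hm H Hp HmHerm HHerm HpHerm x Hcase.
  destruct (hermite_recurrences k Hm H Hp HmHerm HHerm HpHerm)
    as [H_deriv [Hm_deriv [Hp_rec [H_asym Hm_asym]]]].
  replace (H x ^ 2 - Hm x * Hp x) with (turan k Hm H x) by (unfold turan; rewrite Hp_rec; ring).
  apply Rlt_gt; destruct Hcase as [Hk | [Hk [L [[HL _] HLx]]]].
  - exact (turan_pos_of_nonpos k Hm H H_deriv Hm_deriv H_asym Hm_asym Hk x).
  - exact (turan_pos_of_pos k Hm H H_deriv Hm_deriv H_asym Hm_asym Hk L x HL HLx).
Qed.
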